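(* Let $n\ge4$, $1\le j\le\lfloor n/2\rfloor$, $G=C_n(\{1,\dots,\lfloor n/2\rfloor\}\setminus\{j\})$ and $k=n/\gcd(n,j)$. Then (i) $\nu(G)=2$ if $k=4$ and $\nu(G)=1$ otherwise; (ii) $G$ is well-covered and Buchsbaum; (iii) $G$ is vertex decomposable (respectively shellable, Cohen–Macaulay, sequentially Cohen–Macaulay, $S_2$) if and only if $\gcd(n,j)=1$.
   Context: The circulant graph $C_n(S)$ ($S\subseteq\{1,\dots,\lfloor n/2\rfloor\}$) has vertex set $\{0,\dots,n-1\}$ with $\{a,b\}$ an edge iff $\min(|a-b|,n-|a-b|)\in S$. Fix a field $\mathbb{K}$. $\Delta_G$ is the independence complex of $G$. $G$ is well-covered if all maximal independent sets have the same cardinality. $\nu(G)$ is the maximum number of edges in an induced matching (pairwise disjoint edges such that the induced subgraph on their endpoints has exactly these edges). For a face $F$, $\mathrm{lk}(F)=\{H\in\Delta:H\cap F=\emptyset,H\cup F\in\Delta\}$, $\mathrm{del}(F)=\{H\in\Delta:H\cap F=\emptyset\}$. $G$ is Cohen–Macaulay if $\widetilde H_i(\mathrm{lk}_{\Delta_G}(F);\mathbb{K})=0$ for every face $F$ and $i<\dim\mathrm{lk}_{\Delta_G}(F)$; Buchsbaum if $G\setminus N_G[x]$ is Cohen–Macaulay for every vertex $x$; $S_2$ if $\mathrm{lk}_{\Delta_G}(F)$ is connected for every face $F$ with $\dim\mathrm{lk}_{\Delta_G}(F)\ge1$; sequentially Cohen–Macaulay if each pure $i$-th skeleton of $\Delta_G$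 (generated by the $i$-dimensional faces) is Cohen–Macaulay. A pure complex is vertex decomposable if it is a simplex or has a vertex $x$ with $\mathrm{lk}(x)$, $\mathrm{del}(x)$ vertex decomposable; shellable if pure with a facet order $F_1<\dots<F_r$ such that for all $j<i$ there are $x\in F_i\setminus F_j$ and $k<i$ with $F_i\setminus F_k=\{x\}$. $G$ has a property when $\Delta_G$ does. *)

From HB Require Import structures.
From mathcomp Require Import all_boot all_order all_algebra.
Set Implicit Arguments. Unset Strict Implicit. Unset Printing Implicit Defensive.
Import GRing.Theory Num.Theory.

(* Simplicial complexes on a finite vertex type T are represented as
   families of faces D : {set {set T}} (closed under subsets in all uses). *)
Section Complexes.
Variable T : finType.
Implicit Types (D : {set {set T}}) (F : {set T}).

Definition lk D F : {set {set T}} :=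
  [set H in D | [disjoint H & F] && (H :|: F \in D)].
Definition del D F : {set {set T}} := [set H in D | [disjoint H & F]].

Definition dimc D : int := ((\max_(F in D) #|F|)%N%:Z - 1)%R.

Definition facets D : {set {set T}} :=
  [set F in D | [forall H in D, (F \subset H) ==> (H == F)]].
Definition pure D : Prop := forall F H, F \in facets D -> H \in facets D -> #|F| = #|H|.

(* augmented simplicial chain complex over a field K:
   C_{k-1} has basis the faces of cardinality k (so C_{-1} = K <empty face>). *)
Definition faces_sz D (k : nat) : seq {set T} := enum [set F in D | #|F| == k].
Definition cols D (k : nat) : seq {set T} :=
  if k is k'.+1 then faces_sz D k' else [::].
Definition pos (s : {set T}) (v : T) : nat :=
  #|[set u in s | (enum_rank u < enum_rank v)%N]|.

(* boundary map from faces of size k to faces of size k-1, acting on row vectors *)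
Definition bd (K : fieldType) D (k : nat)
  : 'M[K]_(size (faces_sz D k), size (cols D k)) :=
  \matrix_(a, b)
    (let s := nth set0 (faces_sz D k) a in
     let t := nth set0 (cols D k) b in
     if (t \subset s) && (#|s| == #|t|.+1)
     then \sum_(v in s :\: t) (-1) ^+ pos s v else 0)%R.

(* reduced homology  \tilde H_i(D; K) vanishes *)
Definition hvanish (K : fieldType) D (i : int) : Prop :=
  match i with
  | Posz m => (kermx (bd K D m.+1) <= bd K D m.+2)%MS
  | Negz 0 => (kermx (bd K D 0) <= bd K D 1)%MS
  | Negz _ => True
  end.

Definition CM (K : fieldType) D : Prop :=
  forall F, F \in D -> forall i : int, (i < dimc (lk D F))%R -> hvanish K (lk D F) i.

Definition connectedc D : Prop :=
  forall u v, [set u] \in D -> [set v] \in D ->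
    connect (fun x y => [set x; y] \in D) u v.

Definition S2 D : Prop :=
  forall F, F \in D -> (1 <= dimc (lk D F))%R -> connectedc (lk D F).

(* pure i-th skeleton: generated by the i-dimensional faces *)
Definition skel D (i : nat) : {set {set T}} :=
  [set F : {set T} | [exists H in D, (#|H| == i.+1) && (F \subset H)]].

Definition seqCM (K : fieldType) D : Prop := forall i : nat, CM K (skel D i).

Inductive vdec : {set {set T}} -> Prop :=
| vdec_simplex (F : {set T}) : vdec (powerset F)
| vdec_step D (x : T) : pure D -> [set x] \in D ->
    vdec (lk D [set x]) -> vdec (del D [set x]) -> vdec D.

Definition shellable D : Prop :=
  pure D /\
  exists s : seq {set T}, perm_eq s (enum (facets D)) /\
    forall i j, (j < i < size s)%N ->
      exists2 x, x \in nth set0 s i :\: nth set0 s j &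
      exists2 k, (k < i)%N & nth set0 s i :\: nth set0 s k = [set x].

(* Graphs: vertex set V with adjacency e (symmetric, irreflexive) *)
Definition independent (V : {set T}) (e : rel T) (A : {set T}) : bool :=
  (A \subset V) && [forall x in A, forall y in A, ~~ e x y].
Definition indep_complex (V : {set T}) (e : rel T) : {set {set T}} :=
  [set A | independent V e A].
Definition max_independent (V : {set T}) (e : rel T) (A : {set T}) : Prop :=
  independent V e A /\ forall B, independent V e B -> A \subset B -> B = A.
Definition well_covered (V : {set T}) (e : rel T) : Prop :=
  forall A B, max_independent V e A -> max_independent V e B -> #|A| = #|B|.

Definition nbhd (e : rel T) (x : T) : {set T} := [set y | (y == x) || e x y].
Definition buchsbaum (K : fieldType) (V : {set T}) (e : rel T) : Prop :=
  forall x, x \in V -> CM K (indep_complex (V :\: nbhd e x) e).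

Definition induced_matching (V : {set T}) (e : rel T) (M : {set {set T}}) : bool :=
  [&& [forall E in M, [&& E \subset V, #|E| == 2 &
                         [forall x in E, forall y in E, (x != y) ==> e x y]]],
      [forall E in M, forall E' in M, (E != E') ==> [disjoint E & E']] &
      [forall x in cover M, forall y in cover M,
         e x y ==> [exists E in M, (x \in E) && (y \in E)]]].

Definition nu (V : {set T}) (e : rel T) : nat :=
  \max_(M : {set {set T}} | induced_matching V e M) #|M|.

End Complexes.

Definition circulant (n : nat) (S : pred nat) : rel 'I_n :=
  fun a b => let d := (maxn a b - minn a b)%N in S (minn d (n - d)).
Arguments circulant n S : clear implicits.

From mathcomp Require Import all_boot all_order all_algebra zify.
Set Implicit Arguments. Unset Strict Implicit. Unset Printing Implicit Defensive.
Import GRing.Theory Num.Theory.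

(* Two vertices are non-adjacent in G exactly when they differ by +-j modulo
   n, so the independence complex D of G is the clique complex of the
   circulant C_n({j}), a disjoint union of gcd(n, j) cycles of length
   k = n / gcd(n, j) (triangles when 3j = n).  Consequently:
   - D is pure of dimension 1 (or 2 when 3j = n), so G is well-covered, and
     for every vertex x the complex of G \ N[x] lives on {x + j, x - j}, so it
     is Cohen-Macaulay and G is Buchsbaum;
   - two edges of an induced matching of G span a 4-cycle of C_n({j}), so
     nu(G) = 2 when n = 4j (i.e. k = 4) and nu(G) = 1 otherwise;
   - if gcd(n, j) > 1, residues modulo gcd(n, j) are constant along edges of
     D, so D has an edge but is disconnected; if gcd(n, j) = 1, D is the
     single n-cycle 0, j, 2j, ... . *)

Section Complexes.
Variables (T : finType) (K : fieldType).
Implicit Types (D : {set {set T}}) (F H : {set T}).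
Local Open Scope ring_scope.

Lemma sum_nth_indicator (R : pzSemiRingType) (I : eqType) (r : seq I) x0 (s : I)
    (F : I -> R) : uniq r ->
  \sum_(i < size r) (nth x0 r i == s)%:R * F (nth x0 r i) = (s \in r)%:R * F s.
Proof.
move=> ur.
rewrite -(big_mkord xpredT (fun i => (nth x0 r i == s)%:R * F (nth x0 r i))).
rewrite -(big_nth x0 xpredT (fun x => (x == s)%:R * F x)).
rewrite (bigID (fun x => x == s)) /= [X in _ + X]big1 ?addr0; last first.
  by move=> i /negbTE ->; rewrite mul0r.
rewrite (eq_bigr (fun x => F x)); last by move=> i ->; rewrite mul1r.
case: (boolP (s \in r)) => sr; last first.
  rewrite big_seq_cond big_pred0 ?mul0r // => x; apply/andP => [[xr /eqP xs]].
  by rewrite -xs xr in sr.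
rewrite (big_rem s sr) /= eqxx mul1r big_seq_cond big_pred0 ?addr0 // => x.
apply/andP => [[xr /eqP xs]]; move: ur; rewrite (perm_uniq (perm_to_rem sr)) /=.
by case/andP => /negP H _; apply: H; move: xr; rewrite xs.
Qed.


Definition simplicial D := forall F H, F \in D -> H \subset F -> H \in D.

Definition adj D : rel T := fun x y => [set x; y] \in D.

Lemma adj_sym D : symmetric (adj D).
Proof. by move=> a b; rewrite /adj setUC. Qed.

Lemma adj_in_face D F a b : simplicial D -> F \in D -> a \in F -> b \in F -> adj D a b.
Proof. by move=> hcl FD aF bF; apply: hcl FD _; rewrite subUset !sub1set aF bF. Qed.

Lemma connected_from D x : (forall w, [set w] \in D -> connect (adj D) x w) ->
  forall u v, [set u] \in D -> [set v] \in D -> connect (adj D) u v.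
Proof.
move=> h u v uD vD; apply: connect_trans (h v vD).
by rewrite (sym_connect_sym (@adj_sym D)); apply: h.
Qed.

(** Reduced homology in degrees -1 and 0. *)

Lemma faces_szP D k F : (F \in faces_sz D k) = (F \in D) && (#|F| == k).
Proof. by rewrite /faces_sz mem_enum inE. Qed.

Lemma nth_faces D k (i : 'I_(size (faces_sz D k))) :
  nth set0 (faces_sz D k) i \in D /\ #|nth set0 (faces_sz D k) i| = k.
Proof. by have := mem_nth set0 (ltn_ord i); rewrite faces_szP => /andP[-> /eqP ->]. Qed.

Definition face_index D k F (hF : F \in faces_sz D k) : 'I_(size (faces_sz D k)) :=
  Ordinal (etrans (index_mem _ _) hF).

Lemma nth_face_index D k F (hF : F \in faces_sz D k) :
  nth set0 (faces_sz D k) (face_index hF) = F.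
Proof. exact: nth_index. Qed.

Lemma bd1_const D : bd K D 1 = const_mx 1.
Proof.
apply/matrixP => q b; rewrite !mxE /=.
have [_ /eqP] := nth_faces (b : 'I_(size (faces_sz D 0))); rewrite cards_eq0 => /eqP ->.
have [_ /eqP /cards1P [w ->]] := nth_faces q.
rewrite sub0set cards1 cards0 eqxx /= setD0 big_set1.
suff -> : pos [set w] w = 0%N by rewrite expr0.
apply/eqP; rewrite cards_eq0; apply/eqP/setP => u; rewrite !inE.
by case: eqP => // ->; rewrite ltnn.
Qed.

Definition vertex_vec D (s : {set T}) : 'rV[K]_(size (faces_sz D 1)) :=
  \row_q ((nth set0 (faces_sz D 1) q == s)%:R).

Lemma vertex_vec_mul D s (f : 'cV[K]_(size (faces_sz D 1))) (phi : {set T} -> K) :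
  (forall q, f q 0 = phi (nth set0 (faces_sz D 1) q)) ->
  (vertex_vec D s *m f) 0 0 = (s \in faces_sz D 1)%:R * phi s.
Proof.
move=> hf; rewrite mxE -(sum_nth_indicator set0 s phi (enum_uniq _)).
by apply: eq_bigr => q _; rewrite mxE hf.
Qed.

Lemma vertex_vec_const D s m :
  vertex_vec D s *m (const_mx 1 : 'M_(_, m)) = const_mx ((s \in faces_sz D 1)%:R).
Proof.
apply/matrixP => i b; rewrite !mxE -[RHS]mulr1.
rewrite -(sum_nth_indicator set0 s (fun=> (1 : K)) (enum_uniq _)).
by apply: eq_bigr => q _; rewrite !mxE.
Qed.

Lemma pos_pair_sign (a b : T) : a != b ->
  (-1) ^+ pos [set a; b] a = - (-1) ^+ pos [set a; b] b :> K.
Proof.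
have pos2 (x y : T) : x != y -> pos [set x; y] x = (enum_rank y < enum_rank x)%N.
  move=> xy; rewrite /pos.
  have -> : [set u in [set x; y] | (enum_rank u < enum_rank x)%N] =
      if (enum_rank y < enum_rank x)%N then [set y] else set0.
    case: ifP => h; apply/setP => u; rewrite !inE;
    (case: (eqVneq u x) => [->|ux]; first by rewrite ltnn andbF ?(negbTE xy));
    by case: (eqVneq u y) => [->|uy] //=; rewrite ?h ?orbT ?andbT.
  by case: ifP => _; rewrite ?cards1 ?cards0.
move=> ab; rewrite pos2 // setUC pos2 1?eq_sym //.
case: (ltngtP (enum_rank a : nat) (enum_rank b)) => h /=; rewrite ?expr1 ?expr0 ?opprK //.
by move/ord_inj/enum_rank_inj: h => h; rewrite h eqxx in ab.
Qed.

Lemma bd2_row_edge D (p : 'I_(size (faces_sz D 2))) a b :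
  nth set0 (faces_sz D 2) p = [set a; b] -> a != b ->
  row p (bd K D 2) =
    (-1) ^+ pos [set a; b] b *: (vertex_vec D [set a] - vertex_vec D [set b]).
Proof.
move=> hp ab; apply/rowP => q; rewrite !mxE /= hp.
have [_ /eqP /cards1P [w hw]] := nth_faces (q : 'I_(size (faces_sz D 1))).
rewrite hw cards1 cards2 ab /= sub1set !(inj_eq set1_inj) !inE.
case: (eqVneq w a) => [->|wa] /=.
  by rewrite setU1K ?inE // big_set1 (negbTE ab) subr0 mulr1.
case: (eqVneq w b) => [->|wb] /=; last by rewrite subr0 mulr0.
have -> : [set a; b] :\ b = [set a] by rewrite setUC setU1K // inE eq_sym.
by rewrite big_set1 pos_pair_sign // sub0r mulrN1.
Qed.

Lemma vertex_diff_boundary D x y : connect (adj D) x y ->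
  (vertex_vec D [set x] - vertex_vec D [set y] <= bd K D 2)%MS.
Proof.
case/connectP => p; elim: p x => [|z p IH] x /=; first by move=> _ ->; rewrite subrr sub0mx.
case/andP => exz /IH {}IH /IH hzy.
rewrite -[_ - _](subrKA (vertex_vec D [set z])) addrC; apply: addmx_sub => //.
case: (eqVneq x z) => [->|xz]; first by rewrite subrr sub0mx.
have hE : [set x; z] \in faces_sz D 2 by rewrite faces_szP cards2 xz andbT.
have := row_sub (face_index hE) (bd K D 2).
rewrite (bd2_row_edge (nth_face_index hE) xz) => /(scalemx_sub ((-1) ^+ pos [set x; z] z)).
by rewrite scalerA -expr2 sqrr_sign scale1r.
Qed.

Lemma submx_const_row k l m (M : 'M[K]_(k, m)) (B : 'M_(l, m)) p :
  (m <= 1)%N -> row p B = const_mx 1 -> (M <= B)%MS.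
Proof.
move=> hm hr; apply/row_subP => i; move: (row i M) => w.
move: B w hr hm; case: m {M} => [|[|m]] B w hr hm //; first by rewrite thinmx0 sub0mx.
have -> : w = w 0 0 *: row p B by apply/rowP => z; rewrite ord1 hr !mxE mulr1.
exact/scalemx_sub/row_sub.
Qed.

Lemma hvanish_m1 D x : [set x] \in D -> hvanish K D (Negz 0).
Proof.
move=> hx /=.
have hq : [set x] \in faces_sz D 1 by rewrite faces_szP hx cards1.
apply: (@submx_const_row _ _ (size (faces_sz D 0)) _ _ (face_index hq)).
  rewrite /faces_sz -cardE -(cards1 (set0 : {set T})); apply: subset_leq_card.
  by apply/subsetP => F; rewrite !inE cards_eq0 => /andP[_].
by rewrite bd1_const; apply/rowP => z; rewrite !mxE.
Qed.

(* A connected complex containing the empty face has vanishing \tilde H_0: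
   a 0-cycle has coefficient sum 0, so it is a combination of differences of
   vertices, which are boundaries by [vertex_diff_boundary]. *)
Lemma hvanish0_connected D : set0 \in D -> connectedc D -> hvanish K D 0.
Proof.
move=> h0 hc /=; apply/row_subP => i; set u := row i _.
have hu : u *m bd K D 1 = 0 by apply/sub_kermxP; exact: row_sub.
have vert (q : 'I_(size (faces_sz D 1))) :
    exists x, nth set0 (faces_sz D 1) q = [set x] /\ [set x] \in D.
  have [hD /eqP /cards1P [x hx]] := nth_faces q.
  by exists x; rewrite -hx.
have ue : u = \sum_q u 0 q *: vertex_vec D (nth set0 (faces_sz D 1) q).
  apply/rowP => r; rewrite summxE (bigD1 r) //= big1 ?addr0.
    by rewrite [in RHS]mxE [X in _ * X]mxE eqxx mulr1.
  move=> q qr; rewrite !mxE nth_uniq ?enum_uniq //.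
  by case: eqP => [/ord_inj rq|_]; [rewrite rq eqxx in qr | rewrite mulr0].
case: (pickP (fun _ : 'I_(size (faces_sz D 1)) => true)) => [q0 _|none]; last first.
  by rewrite ue big1 ?sub0mx // => q; have := none q.
have [x0 [hx0 hx0D]] := vert q0.
have sum0 : \sum_q u 0 q = 0.
  have hs0 : set0 \in faces_sz D 0 by rewrite faces_szP h0 cards0.
  have := congr1 (fun M : 'M[K]_(1, size (cols D 1)) => M 0 (face_index hs0)) hu.
  rewrite bd1_const [RHS]mxE mxE => h; apply: etrans h.
  by apply: eq_bigr => q _; rewrite !mxE mulr1.
rewrite ue (_ : \sum_q _ = \sum_q u 0 q *: (vertex_vec D (nth set0 (faces_sz D 1) q)
   - vertex_vec D [set x0]) + (\sum_q u 0 q) *: vertex_vec D [set x0]); last first.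
  by rewrite scaler_suml -big_split /=; apply: eq_bigr => q _; rewrite scalerBr subrK.
rewrite sum0 scale0r addr0; apply: summx_sub => q _; apply: scalemx_sub.
have [x [-> hxD]] := vert q; exact: vertex_diff_boundary (hc _ _ hxD hx0D).
Qed.

(* Conversely, if two vertices u, v of a complex lie in different components,
   the 0-cycle u - v is not a boundary: the indicator of the component of u is
   a cocycle taking different values on u and v. *)
Lemma hvanish0_disconnected D u v : set0 \in D -> simplicial D ->
  [set u] \in D -> [set v] \in D -> ~~ connect (adj D) u v -> ~ hvanish K D 0.
Proof.
move=> h0 hcl hu hv nc /= hk.
set c := vertex_vec D [set u] - vertex_vec D [set v].
have huV : [set u] \in faces_sz D 1 by rewrite faces_szP hu cards1.
have hvV : [set v] \in faces_sz D 1 by rewrite faces_szP hv cards1.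
have hck : (c <= kermx (bd K D 1))%MS.
  by apply/sub_kermxP; rewrite bd1_const mulmxBl !vertex_vec_const huV hvV subrr.
have /submxP [w hw] := submx_trans hck hk.
pose comp x := connect (adj D) u x.
pose phi (t : {set T}) : K := [exists z in t, comp z]%:R.
have phi1 x : phi [set x] = (comp x)%:R.
  rewrite /phi; suff -> : [exists z in [set x], comp z] = comp x by [].
  apply/exists_inP/idP => [[z /set1P -> //]|cx].
  by exists x; rewrite ?inE.
pose f : 'cV[K]_(size (faces_sz D 1)) := \col_q phi (nth set0 (faces_sz D 1) q).
have hfq q : f q 0 = phi (nth set0 (faces_sz D 1) q) by rewrite mxE.
have cocycle : bd K D 2 *m f = 0.
  apply/matrixP => p z; rewrite ord1 [RHS]mxE.
  have -> : (bd K D 2 *m f) p 0 = (row p (bd K D 2) *m f) 0 0 by rewrite -row_mul [RHS]mxE.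
  have [hE /eqP /cards2P [a [b [ab hab]]]] := nth_faces p.
  rewrite (bd2_row_edge hab ab) -scalemxAl mulmxBl [LHS]mxE [X in _ * X]mxE.
  rewrite [X in _ + X]mxE.
  rewrite !(vertex_vec_mul _ hfq) hab in hE *.
  have vert x : x \in [set a; b] -> [set x] \in faces_sz D 1.
    by move=> xE; rewrite faces_szP cards1 eqxx andbT (hcl _ _ hE) // sub1set.
  rewrite !vert ?inE ?eqxx ?orbT // !phi1.
  suff -> : comp a = comp b by rewrite subrr mulr0.
  apply/idP/idP => h; apply: connect_trans h (connect1 _) => //.
  by rewrite adj_sym.
have := congr1 (fun M => (M *m f) 0 0) hw; rewrite /= -mulmxA cocycle mulmx0 [RHS]mxE.
rewrite /c mulmxBl [LHS]mxE [X in _ + X]mxE !(vertex_vec_mul _ hfq) huV hvV !phi1 /comp.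
rewrite connect0 (negbTE nc) /= mulr0 subr0 mulr1.
by move/eqP; rewrite oner_eq0.
Qed.

(** Dimension, links and skeleta. *)

Lemma max_face_gtP D m :
  reflect (exists2 H, H \in D & m < #|H|)%N (m < \max_(F in D) #|F|)%N.
Proof.
apply: (iffP idP) => [hm|[H HD hH]]; last exact: leq_trans hH (leq_bigmax_cond _ HD).
apply/exists_inP; apply: contraLR hm => /exists_inP hn; rewrite -leqNgt.
by apply/bigmax_leqP => F FD; rewrite leqNgt; apply/negP => hF; apply: hn; exists F.
Qed.

Lemma dimc_gtP D (m : nat) :
  reflect (exists2 H, H \in D & m.+1 < #|H|)%N (Posz m < dimc D).
Proof.
rewrite /dimc; set M := (\max_(F in D) #|F|)%N.
by rewrite (_ : (_ < _) = (m.+1 < M)%N); [exact: max_face_gtP | apply/idP/idP; lia].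
Qed.

Lemma dimc_ge0P D : reflect (exists2 H, H \in D & 0 < #|H|)%N (Negz 0 < dimc D).
Proof.
rewrite /dimc; set M := (\max_(F in D) #|F|)%N.
by rewrite (_ : (_ < _) = (0 < M)%N); [exact: max_face_gtP | apply/idP/idP; lia].
Qed.

Lemma lk_set0 D : lk D set0 = D.
Proof.
apply/setP => H; rewrite !inE setU0.
by rewrite (_ : [disjoint H & set0]) ?andbT ?andbb // disjoints_subset setC0 subsetT.
Qed.

Lemma simplicial_lk D F : simplicial D -> simplicial (lk D F).
Proof.
move=> hcl H H' /[!inE] /and3P [HD dHF HFD] sH; rewrite (hcl _ _ HD sH).
rewrite (disjointWl sH dHF) /=; apply: hcl HFD _; exact: setSU.
Qed.

Lemma simplicial_del D F : simplicial D -> simplicial (del D F).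
Proof.
move=> hcl H H' /[!inE] /andP [HD dHF] sH; rewrite (hcl _ _ HD sH).
exact: (disjointWl sH dHF).
Qed.

Lemma simplicial_skel D i : simplicial (skel D i).
Proof.
move=> F F' /[!inE] /exists_inP [H HD /andP [hH FH]] sF.
by apply/exists_inP; exists H => //; rewrite hH (subset_trans sF FH).
Qed.

Lemma skel_sub D i : simplicial D -> forall F, F \in skel D i -> F \in D.
Proof. by move=> hcl F /[!inE] /exists_inP [H HD /andP [_ FH]]; exact: hcl HD FH. Qed.

Lemma simplicial_indep (V : {set T}) (e : rel T) : simplicial (indep_complex V e).
Proof.
move=> F H /[!inE] /andP [FV /forall_inP hF] sH; apply/andP; split.
  exact: subset_trans sH FV.
apply/forall_inP => x xH; apply/forall_inP => y yH.
by move/forall_inP: (hF x (subsetP sH _ xH)) => /(_ y (subsetP sH _ yH)).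
Qed.

Lemma lk_edge_set0 D F H : (forall E, E \in D -> #|E| <= 2)%N ->
  H \in lk D F -> (1 < #|H|)%N -> F = set0.
Proof.
move=> hsz /[!inE] /and3P [_ dHF /hsz] hHF hH; apply/eqP; rewrite -cards_eq0.
by move: hHF; rewrite cardsU (disjoint_setI0 dHF) cards0 subn0; lia.
Qed.

(** Complexes of dimension <= 1 (graphs): CM, S_2 and sequentially CM all
    amount to connectedness. *)

Lemma CM_dim1 D : simplicial D -> (forall H, H \in D -> #|H| <= 2)%N ->
  ((exists2 H, H \in D & #|H| = 2%N) -> connectedc D) -> CM K D.
Proof.
move=> hcl hsz hcon F FD [m|[|//]] hi.
  have /dimc_gtP [H HL hH] := hi; have F0 := lk_edge_set0 hsz HL (leq_ltn_trans (ltn0Sn m) hH).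
  case: m hH hi => [|m] hH hi; last first.
    by move: HL; rewrite F0 lk_set0 => /hsz; lia.
  rewrite F0 lk_set0 in HL *; have h0 : set0 \in D by apply: hcl FD (sub0set _).
  apply: hvanish0_connected h0 (hcon _); exists H => //.
  by apply/eqP; rewrite eqn_leq hsz.
have /dimc_ge0P [H HL /card_gt0P [x xH]] := hi.
by apply: (@hvanish_m1 _ x); apply: (simplicial_lk hcl HL); rewrite sub1set.
Qed.

Lemma S2_dim1 D : (forall H, H \in D -> #|H| <= 2)%N -> connectedc D -> S2 D.
Proof.
move=> hsz hcon F FD /dimc_gtP [H HL hH].
by rewrite (lk_edge_set0 hsz HL hH) lk_set0.
Qed.

Lemma seqCM_dim1 D : simplicial D -> (forall H, H \in D -> #|H| <= 2)%N ->
  connectedc D -> seqCM K D.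
Proof.
move=> hcl hsz hcon i; apply: CM_dim1; first exact: simplicial_skel.
  by move=> H /(skel_sub hcl); exact: hsz.
case=> H' /[!inE] /exists_inP [H HD /andP [/eqP hH H'H]] h2 x y xS yS.
have hi : i = 1%N by have := subset_leq_card H'H; have := hsz _ HD; rewrite h2 hH; lia.
subst i; have := hcon x y (skel_sub hcl xS) (skel_sub hcl yS).
apply: connect_sub => a b hab; case: (eqVneq a b) => [->|ab]; first exact: connect0.
apply: connect1; rewrite /adj inE; apply/exists_inP; exists [set a; b] => //.
by rewrite cards2 ab subxx.
Qed.

Lemma not_CM_disconnected D H u v : simplicial D -> H \in D -> (2 <= #|H|)%N ->
  [set u] \in D -> [set v] \in D -> ~~ connect (adj D) u v -> ~ CM K D.
Proof.
move=> hcl HD hH uD vD nc hCM; have h0 : set0 \in D by apply: hcl HD (sub0set _).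
have := hCM set0 h0 0; rewrite lk_set0 => h.
by apply: hvanish0_disconnected h0 hcl uD vD nc (h _); apply/dimc_gtP; exists H.
Qed.

Lemma not_S2_disconnected D H u v : simplicial D -> H \in D -> (2 <= #|H|)%N ->
  [set u] \in D -> [set v] \in D -> ~~ connect (adj D) u v -> ~ S2 D.
Proof.
move=> hcl HD hH uD vD nc hS; have h0 : set0 \in D by apply: hcl HD (sub0set _).
have := hS set0 h0; rewrite lk_set0 => hc.
by move: nc; rewrite (hc _ u v uD vD) //; apply/dimc_gtP; exists H.
Qed.

(* The 1-skeleton of such a complex is then not CM. *)
Lemma not_seqCM_disconnected D Eu Ev u v : simplicial D ->
  Eu \in D -> #|Eu| = 2%N -> u \in Eu -> Ev \in D -> #|Ev| = 2%N -> v \in Ev ->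
  ~~ connect (adj D) u v -> ~ seqCM K D.
Proof.
move=> hcl EuD hEu uE EvD hEv vE nc hs.
have inS (F E : {set T}) : E \in D -> #|E| = 2%N -> F \subset E -> F \in skel D 1.
  by move=> ED hE FE; rewrite inE; apply/exists_inP; exists E => //; rewrite hE FE.
apply: (@not_CM_disconnected (skel D 1) Eu u v (@simplicial_skel D 1) _ _ _ _ _ (hs 1%N)).
- exact: inS EuD hEu (subxx _).
- by rewrite hEu.
- by apply: inS EuD hEu _; rewrite sub1set.
- by apply: inS EvD hEv _; rewrite sub1set.
- apply: contra nc; apply: connect_sub => a b hab.
  apply: connect1; exact: (skel_sub hcl hab).
Qed.

Lemma CM_sub_pair D a b : simplicial D -> (forall H, H \in D -> H \subset [set a; b]) ->
  CM K D.
Proof.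
have card_ab : (#|[set a; b]| <= 2)%N by rewrite cards2; case: (a != b).
move=> hcl hab; apply: CM_dim1 => //.
  by move=> H HD; apply: leq_trans (subset_leq_card (hab _ HD)) _.
case=> H HD h2 x y xD yD.
have eH : H = [set a; b] by apply/eqP; rewrite eqEcard hab //= h2.
apply: connect1; apply: (adj_in_face hcl HD); by rewrite eH -sub1set hab.
Qed.

(** Facets, purity, and connectivity of decomposable complexes. *)

Lemma facet_in D F : F \in facets D -> F \in D.
Proof. by rewrite inE => /andP[]. Qed.

Lemma facet_max D F E : F \in facets D -> E \in D -> F \subset E -> E = F.
Proof.
by rewrite inE => /andP [_ /forall_inP h] ED FE; apply/eqP; move/implyP: (h E ED); apply.
Qed.

Lemma facet_above D F : F \in D -> exists2 H, H \in facets D & F \subset H.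
Proof.
move=> FD; pose P := [pred H | (H \in D) && (F \subset H)].
have PF : P F by rewrite /= FD subxx.
case: (@arg_maxnP _ F P (fun H => #|H|) PF) => H /andP[HD FH] hmax.
exists H => //; rewrite inE HD; apply/forall_inP => H' H'D; apply/implyP => HH'.
rewrite eq_sym eqEcard HH' /=; apply: hmax; by rewrite /= H'D (subset_trans FH HH').
Qed.

Lemma facets_of_max_card D E k : (forall F, F \in D -> #|F| <= k)%N -> E \in D ->
  #|E| = k -> E \in facets D.
Proof.
move=> hle ED hE; rewrite inE ED; apply/forall_inP => H HD; apply/implyP => EH.
by rewrite eq_sym eqEcard EH hE hle.
Qed.

Lemma pure_of_card D k : (forall F, F \in D -> #|F| <= k)%N ->
  (forall F, F \in D -> exists2 E, E \in D & (F \subset E) && (#|E| == k)) -> pure D.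
Proof.
move=> hle hex.
have hk F : F \in facets D -> #|F| = k.
  move=> Ff; have [E ED /andP [FE /eqP <-]] := hex F (facet_in Ff).
  by rewrite (facet_max Ff ED FE).
by move=> F H /hk -> /hk ->.
Qed.

Lemma other_elt (F : {set T}) (w : T) : (2 <= #|F|)%N -> exists2 y, y \in F & y != w.
Proof.
case/card_gt1P => a [b [aF bF ab]].
case: (eqVneq a w) => [aw|aw]; last by exists a.
by exists b => //; rewrite -aw eq_sym.
Qed.

Lemma pure_vertex_edge D B w : pure D -> B \in D -> (2 <= #|B|)%N -> [set w] \in D ->
  exists2 F, F \in D & (w \in F) && (2 <= #|F|)%N.
Proof.
move=> pD BD hB wD; have [FB FBf BFB] := facet_above BD.
have [Fw Fwf wFw] := facet_above wD; exists Fw; first exact: facet_in Fwf.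
rewrite -sub1set wFw (pD _ _ Fwf FBf); exact: leq_trans hB (subset_leq_card BFB).
Qed.

(* A vertex decomposable complex with an edge is connected: by induction, the
   deletion of the shedding vertex x is connected (or edgeless, in which case
   every vertex is a neighbour of x), and x has a neighbour by purity. *)
Lemma vdec_connected D : vdec D -> simplicial D ->
  (exists2 F, F \in D & 2 <= #|F|)%N -> connectedc D.
Proof.
elim => [F|{}D x pD xD _ _ _ IHdel] hcl [B BD hB].
  move=> u v; rewrite !powersetE !sub1set => uF vF; apply: connect1.
  by rewrite /adj powersetE subUset !sub1set uF vF.
have hdel : subrel (connect (adj (del D [set x]))) (connect (adj D)).
  by apply: connect_sub => a b; rewrite /adj inE => /andP [hab _]; apply: connect1.
apply: (@connected_from _ x) => w wD.
case: (eqVneq w x) => [->|wx]; first exact: connect0.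
have wdel : [set w] \in del D [set x] by rewrite inE wD disjoints1 inE.
case: (boolP [exists F in del D [set x], 2 <= #|F|]%N) => [/exists_inP [F Fd hF]|/exists_inP hn].
  have [Fx Fxd /andP [xFx hFx]] := pure_vertex_edge pD BD hB xD.
  have [y yF yx] := other_elt x hFx.
  have ydel : [set y] \in del D [set x].
    by rewrite inE (hcl _ _ Fxd) ?sub1set // disjoints1 inE.
  apply: (@connect_trans _ _ y); first by apply: connect1; exact: (adj_in_face hcl Fxd).
  apply: hdel; apply: IHdel ydel wdel; [exact: simplicial_del | by exists F].
have [Fw FwD /andP [wFw hFw]] := pure_vertex_edge pD BD hB wD.
have xFw : x \in Fw.
  apply/negPn/negP => xn; apply: hn; exists Fw => //.
  by rewrite inE FwD disjoint_sym disjoints1.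
by apply: connect1; exact: (adj_in_face hcl FwD).
Qed.

(* A shellable complex with an edge is connected: each facet F_k (k > 0) meets
   an earlier facet F_k' in all but one vertex, so by induction on k all its
   vertices are connected to the first facet. *)
Lemma shellable_connected D : shellable D -> simplicial D ->
  (exists2 F, F \in D & 2 <= #|F|)%N -> connectedc D.
Proof.
case=> pD [s [hperm hsh]] hcl [B BD hB].
have mem_s F : (F \in s) = (F \in facets D) by rewrite (perm_mem hperm) mem_enum.
have [FB FBf BFB] := facet_above BD.
have hm : (2 <= #|FB|)%N by exact: leq_trans hB (subset_leq_card BFB).
have szs k : (k < size s)%N -> #|nth set0 s k| = #|FB| /\ nth set0 s k \in D.
  move=> ks; have : nth set0 s k \in facets D by rewrite -mem_s mem_nth.
  by move=> h; split; [apply: pD|apply: facet_in].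
have s0 : (0 < size s)%N by rewrite -has_predT; apply/hasP; exists FB; rewrite ?mem_s.
have [y0 y0s] : exists y0, y0 \in nth set0 s 0.
  by apply/card_gt0P; rewrite (szs 0%N s0).1; exact: leq_trans _ hm.
have reach k : (k < size s)%N -> forall z, z \in nth set0 s k -> connect (adj D) y0 z.
  elim/ltn_ind: k => k IH ks z zs.
  case: (posnP k) => [k0|kpos].
    by subst k; apply: connect1; exact: (adj_in_face hcl (szs 0%N s0).2 y0s zs).
  have [x _ [k' k'k hk']] := hsh k 0%N (ltac:(by rewrite kpos ks)).
  have [w ws wx] := other_elt x (leq_trans hm (eq_leq (esym (szs k ks).1))).
  have wk' : w \in nth set0 s k'.
    by apply: contraNT wx => wn; apply/eqP/set1P; rewrite -hk' inE wn ws.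
  apply: connect_trans (IH k' k'k (ltn_trans k'k ks) w wk') (connect1 _).
  exact: (adj_in_face hcl (szs k ks).2 ws zs).
apply: (@connected_from _ y0) => w wD.
have [Fw Fwf wFw] := facet_above wD.
have Fws : Fw \in s by rewrite mem_s.
have hi : (index Fw s < size s)%N by rewrite index_mem.
by apply: (reach _ hi); rewrite nth_index // -sub1set.
Qed.

(** Criteria for shellability and vertex decomposability in dimension 1. *)

Lemma shellable_graph D (s : seq {set T}) : pure D -> perm_eq s (enum (facets D)) ->
  (forall i, (i < size s)%N -> #|nth set0 s i| = 2%N) ->
  (forall i, (0 < i < size s)%N -> exists2 k, (k < i)%N & exists y z,
      [/\ nth set0 s i = [set y; z], y \in nth set0 s k & z \notin nth set0 s k]) ->
  shellable D.
Proof.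
move=> pD hp h2 hadj; split => //; exists s; split => // i j /andP [ji his].
have us : uniq s by rewrite (perm_uniq hp) enum_uniq.
have hi0 : (0 < i < size s)%N by rewrite his (leq_ltn_trans (leq0n j) ji).
have [k ki [y [z [hi yk zk]]]] := hadj i hi0.
have yz : y != z.
  by apply/negP => /eqP e; have := h2 i his; rewrite hi e setUid cards1.
have hk : nth set0 s i :\: nth set0 s k = [set z].
  apply/setP => w; rewrite !inE hi !inE.
  case: (eqVneq w z) => [->|wz]; first by rewrite zk orbT.
  by case: (eqVneq w y) => [->|wy]; rewrite ?yk ?andbF.
case: (boolP (z \in nth set0 s j)) => zj; last first.
  by exists z; [rewrite inE zj hi !inE eqxx orbT | exists k].
have yj : y \notin nth set0 s j.
  apply/negP => yj; have js : (j < size s)%N by exact: ltn_trans ji his.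
  have e : nth set0 s j = nth set0 s i.
    apply/esym/eqP; rewrite eqEcard hi subUset !sub1set yj zj /= -hi h2 // h2 //.
  by move/eqP: e; rewrite nth_uniq // => /eqP e; rewrite e ltnn in ji.
exists y; first by rewrite inE yj hi !inE eqxx.
exists j => //; apply/setP => w; rewrite !inE hi !inE.
case: (eqVneq w y) => [->|wy] /=; first by rewrite (negbTE yj).
by case: (eqVneq w z) => [->|wz]; rewrite ?zj ?andbF ?andbT //= (negbTE wy) (negbTE wz).
Qed.

Lemma vdec_two_points (p q : T) : p != q -> vdec (powerset [set p] :|: powerset [set q]).
Proof.
move=> pq; set Q := _ :|: _.
have inQ A : (A \in Q) = (A \subset [set p]) || (A \subset [set q]) by rewrite !inE ?powersetE.
have sub1 (x : T) (A : {set T}) : A \subset [set x] -> (#|A| <= 1)%N.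
  by move=> h; apply: leq_trans (subset_leq_card h) _; rewrite cards1.
apply: (@vdec_step _ Q p).
- apply: (@pure_of_card _ 1) => F; rewrite inQ => /orP [] h.
  + exact: sub1 h.
  + exact: sub1 h.
  + by exists [set p]; rewrite ?inQ ?subxx ?h ?cards1.
  + by exists [set q]; rewrite ?inQ ?subxx ?h ?cards1 ?orbT.
- by rewrite inQ subxx.
- suff -> : lk Q [set p] = powerset set0 by exact: vdec_simplex.
  apply/setP => A; rewrite powerset0 !inE ?powersetE; apply/idP/idP.
    case/and3P => _ dA; rewrite ?powersetE => /orP [] h.
      apply/eqP/setP => x; rewrite inE; apply/negP => xA.
      have /set1P ex : x \in [set p] by apply: (subsetP h); rewrite inE xA.
      by subst x; move: dA; rewrite disjoint_sym disjoints1 xA.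
    have : p \in [set q] by apply: (subsetP h); rewrite !inE eqxx orbT.
    by rewrite inE (negbTE pq).
  move/eqP ->; rewrite sub0set set0U subxx /= andbT.
  by rewrite disjoint_sym disjoints1 inE.
- suff -> : del Q [set p] = powerset [set q] by exact: vdec_simplex.
  apply/setP => A; rewrite !inE ?powersetE; apply/idP/idP.
    case/andP => /orP [] h dA //; apply/subsetP => x xA.
    have /set1P ex := subsetP h x xA; subst x.
    by move: dA; rewrite disjoint_sym disjoints1 xA.
  move=> h; rewrite h orbT /= disjoint_sym disjoints1.
  by apply/negP => /(subsetP h) /set1P pq'; rewrite pq' eqxx in pq.
Qed.

End Complexes.

(** The graph G = C_n({1, ..., n/2} \ {j}) and its independence complex. *)

Section Circulant.
Variables (n j : nat).
Hypotheses (n_ge4 : 4 <= n) (j_gt0 : 0 < j) (j_le_half : j.*2 <= n).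

Local Notation G := (circulant n (fun d => (1 <= d <= n./2) && (d != j))).
Local Notation D := (indep_complex [set: 'I_n] G).

(* x and y differ by j modulo n, i.e. they are adjacent in C_n({j}). *)
Definition jstep (x y : nat) := [|| y == x + j, y + n == x + j, x == y + j | x + n == y + j].

Lemma jstep_sym x y : jstep x y = jstep y x.
Proof. by rewrite /jstep; apply/idP/idP; lia. Qed.

Lemma jstep_neq (x y : 'I_n) : jstep x y -> x != y.
Proof. have := ltn_ord x; have := ltn_ord y; rewrite -val_eqE /jstep /=; lia. Qed.

Lemma G_adj (a b : 'I_n) : G a b = (a != b) && ~~ jstep a b.
Proof.
have ha := ltn_ord a; have hb := ltn_ord b.
have hh : (n./2).*2 <= n <= (n./2).*2 + 1.
  by have := odd_double_half n; case: (odd n) => /= <-; lia.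
rewrite /circulant /jstep; move: (n./2) hh => h hh.
by rewrite -val_eqE /=; apply/idP/idP; lia.
Qed.

Lemma in_DP (A : {set 'I_n}) :
  reflect (forall x y : 'I_n, x \in A -> y \in A -> x != y -> jstep x y) (A \in D).
Proof.
rewrite inE /independent subsetT /=.
apply: (iffP forall_inP) => [h x y xA yA xy|h x xA].
  by move/forall_inP: (h x xA) => /(_ y yA); rewrite G_adj xy /= negbK.
apply/forall_inP => y yA; rewrite G_adj negb_and negbK.
by case: (eqVneq x y) => //= xy; rewrite negbK; exact: h xA yA xy.
Qed.

Lemma simplicial_D : simplicial D.
Proof. exact: simplicial_indep. Qed.

Definition succ_val (x : nat) := if x + j < n then x + j else x + j - n.
Definition pred_val (x : nat) := if j <= x then x - j else x + n - j.

Lemma succ_valE x : (succ_val x = x + j /\ x + j < n) \/ (succ_val x = x + j - n /\ n <= x + j).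
Proof. rewrite /succ_val; case: ifP => h; [left|right]; lia. Qed.

Lemma succ_val_lt (x : 'I_n) : succ_val x < n.
Proof. have := ltn_ord x; have := succ_valE x; lia. Qed.

Lemma pred_val_lt (x : 'I_n) : pred_val x < n.
Proof. have := ltn_ord x; rewrite /pred_val; case: ifP; lia. Qed.

Definition succ_j (x : 'I_n) : 'I_n := Ordinal (succ_val_lt x).
Definition pred_j (x : 'I_n) : 'I_n := Ordinal (pred_val_lt x).

Lemma jstep_succ (x : 'I_n) : jstep x (succ_j x).
Proof. have := ltn_ord x; have := succ_valE x; rewrite /jstep /=; lia. Qed.

Lemma succ_pred (x : 'I_n) : succ_j (pred_j x) = x.
Proof.
apply: val_inj; have := ltn_ord x; rewrite /= /pred_val.
by case: ifP => h; have := succ_valE (pred_val x); rewrite /pred_val h; lia.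
Qed.

Lemma jstep_nbr (x y : 'I_n) : jstep x y -> y = succ_j x \/ y = pred_j x.
Proof.
have := ltn_ord x; have := ltn_ord y; have := succ_valE x; rewrite /jstep => h1 h2 h3 h4.
have : (y : nat) = succ_val x \/ (y : nat) = pred_val x.
  by move: h1 h2 h3 h4; rewrite /pred_val; case: ifP; lia.
by case=> h; [left|right]; apply: val_inj.
Qed.

Lemma single_in (x : 'I_n) : [set x] \in D.
Proof. by apply/in_DP => a b /set1P -> /set1P ->; rewrite eqxx. Qed.

Lemma pair_in (x y : 'I_n) : jstep x y -> [set x; y] \in D.
Proof.
move=> c; apply/in_DP => a b /set2P [] -> /set2P [] -> //; rewrite ?eqxx //.
by rewrite jstep_sym.
Qed.

Lemma triple_in (x y z : 'I_n) : jstep x y -> jstep y z -> jstep x z -> [set x; y; z] \in D.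
Proof.
move=> c1 c2 c3; apply/in_DP => a b /[!inE] ha hb ab.
have cs u v : jstep u v -> jstep v u by rewrite jstep_sym.
by move: ha hb ab => /orP [/orP [] /eqP ->|/eqP ->] /orP [/orP [] /eqP ->|/eqP ->];
  rewrite ?eqxx //; auto.
Qed.

(* Removing the closed neighbourhood of x leaves only x + j and x - j. *)
Lemma buchsbaum_G (K : fieldType) : buchsbaum K [set: 'I_n] G.
Proof.
move=> x _; apply: (@CM_sub_pair _ K _ (succ_j x) (pred_j x)); first exact: simplicial_indep.
move=> H /[!inE] /andP [HV _]; apply/subsetP => y yH.
move: (subsetP HV y yH); rewrite !inE negb_or G_adj negb_and !negbK andbT => /andP [yx].
by rewrite eq_sym (negbTE yx) /= => /jstep_nbr [] ->; rewrite eqxx ?orbT.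
Qed.

(** Face sizes and well-coveredness. *)

(* Three pairwise j-steps close a triangle, forcing 3j = n. *)
Lemma face3 A : A \in D -> 2 < #|A| -> 3 * j = n.
Proof.
move=> /in_DP hA /card_gt2P [x [y [z [[xA yA zA] [xy yz zx]]]]].
have c1 := hA _ _ xA yA xy; have c2 := hA _ _ yA zA yz; have c3 := hA _ _ zA xA zx.
move: c1 c2 c3 xy yz zx (ltn_ord x) (ltn_ord y) (ltn_ord z); rewrite -!val_eqE /jstep /=; lia.
Qed.

(* A vertex has only two C_n({j})-neighbours, so no face has four vertices. *)
Lemma no_face4 A : A \in D -> #|A| <= 3.
Proof.
move=> AD; rewrite leqNgt; apply/negP => h; move/in_DP: AD => hA.
have [x xA] : exists x, x \in A by apply/card_gt0P; lia.
have : 2 < #|A :\ x| by move: h; rewrite (cardsD1 x A) xA; lia.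
case/card_gt2P => [y [z [w [[yA zA wA] [yz zw wy]]]]].
move: yA zA wA; rewrite !inE => /andP [yx yA] /andP [zx zA] /andP [wx wA].
have c1 := hA _ _ xA yA (ltac:(by rewrite eq_sym)).
have c2 := hA _ _ xA zA (ltac:(by rewrite eq_sym)).
have c3 := hA _ _ xA wA (ltac:(by rewrite eq_sym)).
move: c1 c2 c3 yz zw wy (ltn_ord x) (ltn_ord y) (ltn_ord z) (ltn_ord w).
by rewrite -!val_eqE /jstep /=; lia.
Qed.

Definition facet_size := if 3 * j == n then 3 else 2.

Lemma extend_face A : A \in D -> #|A| < facet_size -> exists2 y, y \notin A & y |: A \in D.
Proof.
move=> AD hs; have n0 : 0 < n by lia.
case: (posnP #|A|) => [/eqP|A0].
  rewrite cards_eq0 => /eqP ->; exists (Ordinal n0); first by rewrite inE.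
  by rewrite setU0 single_in.
case: (eqVneq #|A| 1) => [/eqP /cards1P [a ->]|A1].
  exists (succ_j a); first by rewrite inE eq_sym jstep_neq // jstep_succ.
  by rewrite pair_in // jstep_sym jstep_succ.
have A2 : #|A| = 2 by move: hs A1 A0; rewrite /facet_size; case: ifP; lia.
have j3 : 3 * j = n by move: hs; rewrite A2 /facet_size; case: eqP => // ->.
move/eqP: A2 => /cards2P [a [b [ab eA]]]; subst A.
have cab : jstep a b by move/in_DP: AD; apply; rewrite ?inE ?eqxx ?orbT.
have ha := ltn_ord a; have hb := ltn_ord b.
have sa := succ_valE a; have sb := succ_valE b.
have hsa := succ_val_lt a; have hsb := succ_val_lt b.
have [y [cya cyb yna ynb]] : exists y : 'I_n, [/\ jstep y a, jstep y b, y != a & y != b].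
  case: (boolP ((b : nat) == succ_val a)) => e.
    by exists (succ_j b); rewrite -!val_eqE /=; move: cab e; rewrite /jstep => cab e; split; lia.
  by exists (succ_j a); rewrite -!val_eqE /=; move: cab e; rewrite /jstep => cab e; split; lia.
exists y; first by rewrite !inE negb_or yna ynb.
rewrite (_ : y |: [set a; b] = [set y; a; b]); last by apply/setP => u; rewrite !inE orbA.
by apply: triple_in => //; rewrite jstep_sym.
Qed.

Lemma max_indep_card A : max_independent [set: 'I_n] G A -> #|A| = facet_size.
Proof.
case=> hA hmax; have AD : A \in D by rewrite inE.
case: (ltngtP #|A| facet_size) => // h.
  have [y yA] := extend_face AD h; rewrite inE => /hmax /(_ (subsetUr _ _)) e.
  by move: yA; rewrite -e in_setU1 eqxx.
move: h; rewrite /facet_size; case: eqP => h3 h.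
  by have := no_face4 AD; rewrite leqNgt h.
by have := face3 AD h.
Qed.

Lemma well_covered_G : well_covered [set: 'I_n] G.
Proof. by move=> A B hA hB; rewrite !max_indep_card. Qed.

(** Induced matchings. *)

Lemma k_eq4 : (n %/ gcdn n j == 4) = (4 * j == n).
Proof.
have g0 : 0 < gcdn n j by rewrite gcdn_gt0; lia.
apply/eqP/eqP => h; last by rewrite -h gcdnC gcdnMl mulnK //; lia.
have [t ht] := dvdnP (dvdn_gcdr n j).
have hn4 : n = 4 * gcdn n j by rewrite -{1}(divnK (dvdn_gcdl n j)) h mulnC.
have e : gcdn (4 * gcdn n j) (t * gcdn n j) = gcdn n j by rewrite -hn4 -ht.
move: e; rewrite -muln_gcdl; move: (gcdn n j) g0 ht hn4 => g g0 ht hn4 e.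
have [t1|t2] : t = 1 \/ t = 2 by nia.
  by lia.
by move: e; rewrite t2 (_ : gcdn 4 2 = 2) //; lia.
Qed.

Lemma matching_card2 M E : induced_matching [set: 'I_n] G M -> E \in M -> #|E| = 2.
Proof. by case/and3P => /forall_inP h1 _ _ EM; case/and3P: (h1 _ EM) => _ /eqP. Qed.

(* Vertices of two distinct edges of an induced matching are non-adjacent in
   G, hence j-steps apart. *)
Lemma matching_jstep M E1 E2 a c : induced_matching [set: 'I_n] G M -> E1 \in M -> E2 \in M ->
  E1 != E2 -> a \in E1 -> c \in E2 -> jstep a c.
Proof.
case/and3P => _ /forall_inP hdis /forall_inP hind E1M E2M E12 aE cE.
have disj E E' : E \in M -> E' \in M -> E != E' -> [disjoint E & E'].
  by move=> EM E'M; move/forall_inP: (hdis _ EM) => /(_ _ E'M) /implyP.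
have d12 := disj _ _ E1M E2M E12.
have ac : a != c by apply: contraTneq cE => <-; rewrite (disjointFr d12 aE).
suff : ~~ G a c by rewrite G_adj ac /= negbK.
apply/negP => hG.
have acov : a \in cover M by apply/bigcupP; exists E1.
have ccov : c \in cover M by apply/bigcupP; exists E2.
move/forall_inP: (hind _ acov) => /(_ _ ccov) /implyP /(_ hG) /exists_inP [E EM /andP [aE' cE']].
case: (eqVneq E E1) => [eE|nE]; first by subst E; rewrite (disjointFr d12 cE') in cE.
by rewrite (disjointFr (disj _ _ EM E1M nE) aE') in aE.
Qed.

(* Three edges would give a vertex with three j-step neighbours. *)
Lemma matching_le2 M : induced_matching [set: 'I_n] G M -> #|M| <= 2.
Proof.
move=> hM; rewrite leqNgt; apply/negP => /card_gt2P [E1 [E2 [E3 [[h1 h2 h3] [d12 d23 d31]]]]].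
have [a aE] : exists a, a \in E1 by apply/card_gt0P; rewrite (matching_card2 hM h1).
have [e eE] : exists e, e \in E3 by apply/card_gt0P; rewrite (matching_card2 hM h3).
have /cards2P [c [d [cd eE2]]] : #|E2| == 2 by rewrite (matching_card2 hM h2).
have cE2 : c \in E2 by rewrite eE2 !inE eqxx.
have dE2 : d \in E2 by rewrite eE2 !inE eqxx orbT.
have c1 := matching_jstep hM h1 h2 d12 aE cE2; have c2 := matching_jstep hM h1 h2 d12 aE dE2.
have c3 := matching_jstep hM h1 h3 (ltac:(by rewrite eq_sym)) aE eE.
have c4 := matching_jstep hM h2 h3 d23 cE2 eE; have c5 := matching_jstep hM h2 h3 d23 dE2 eE.
move: c1 c2 c3 c4 c5 cd (ltn_ord a) (ltn_ord c) (ltn_ord d) (ltn_ord e).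
by rewrite -!val_eqE /jstep /=; lia.
Qed.

(* Two edges {a, b}, {c, d} with all four cross pairs j-steps form a 4-cycle
   of C_n({j}), forcing n = 4j. *)
Lemma matching_two M : induced_matching [set: 'I_n] G M -> 1 < #|M| -> 4 * j = n.
Proof.
move=> hM /card_gt1P [E1 [E2 [h1 h2 d12]]].
have /cards2P [a [b [ab eE1]]] : #|E1| == 2 by rewrite (matching_card2 hM h1).
have /cards2P [c [d [cd eE2]]] : #|E2| == 2 by rewrite (matching_card2 hM h2).
have aE : a \in E1 by rewrite eE1 !inE eqxx.
have bE : b \in E1 by rewrite eE1 !inE eqxx orbT.
have cE : c \in E2 by rewrite eE2 !inE eqxx.
have dE : d \in E2 by rewrite eE2 !inE eqxx orbT.
have c1 := matching_jstep hM h1 h2 d12 aE cE; have c2 := matching_jstep hM h1 h2 d12 aE dE.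
have c3 := matching_jstep hM h1 h2 d12 bE cE; have c4 := matching_jstep hM h1 h2 d12 bE dE.
move: c1 c2 c3 c4 ab cd (ltn_ord a) (ltn_ord b) (ltn_ord c) (ltn_ord d).
by rewrite -!val_eqE /jstep /=; lia.
Qed.

Lemma matching_edge (u v : 'I_n) : G u v -> induced_matching [set: 'I_n] G [set [set u; v]].
Proof.
move=> huv; have uv : u != v by move: huv; rewrite G_adj => /andP [].
have Gs x y : G x y -> G y x by rewrite !G_adj eq_sym jstep_sym.
apply/and3P; split.
- apply/forall_inP => E /set1P ->; rewrite subsetT cards2 uv /=.
  apply/forall_inP => x /set2P [] ->; apply/forall_inP => y /set2P [] ->;
  by apply/implyP; rewrite ?eqxx //= => _; auto.
- by apply/forall_inP => E /set1P ->; apply/forall_inP => E' /set1P ->; rewrite eqxx.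
- rewrite cover1; apply/forall_inP => x xE; apply/forall_inP => y yE; apply/implyP => _.
  by apply/exists_inP; exists [set u; v]; [rewrite inE | rewrite xE yE].
Qed.

(* When n = 4j, the diagonals {0, 2j} and {j, 3j} of the 4-cycle
   0, j, 2j, 3j of C_n({j}) form an induced matching of G. *)
Lemma matching_diagonals (h4 : 4 * j = n) : exists M,
  induced_matching [set: 'I_n] G M /\ #|M| = 2.
Proof.
have h0 : 0 < n by lia. have hj : j < n by lia.
have h2 : 2 * j < n by lia. have h3 : 3 * j < n by lia.
pose o0 := Ordinal h0; pose oj := Ordinal hj; pose o2 := Ordinal h2; pose o3 := Ordinal h3.
have in2 (x u v : 'I_n) : (x \in [set u; v]) = ((x : nat) == u) || ((x : nat) == v).
  by rewrite !inE.
pose E1 := [set o0; o2]; pose E2 := [set oj; o3].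
have E12 : E1 != E2.
  apply/negP => /eqP e; have : o0 \in E2 by rewrite -e !inE eqxx.
  by rewrite in2 /=; lia.
exists [set E1; E2]; split; last by rewrite cards2 E12.
apply/and3P; split.
- apply/forall_inP => E /set2P [] ->; rewrite subsetT cards2 -val_eqE /=;
  (apply/andP; split; first by lia);
  apply/forall_inP => x; rewrite in2 /= => hx; apply/forall_inP => y; rewrite in2 /= => hy;
  by apply/implyP; rewrite G_adj -val_eqE /jstep /=; lia.
- have dis : [disjoint E1 & E2].
    by rewrite disjoints_subset; apply/subsetP => x; rewrite in2 inE in2 /=; lia.
  apply/forall_inP => E /set2P [] ->; apply/forall_inP => E' /set2P [] ->;
  by apply/implyP; rewrite ?eqxx //= => _; rewrite // disjoint_sym.
- apply/forall_inP => x /bigcupP [B1 hB1 xB]; apply/forall_inP => y /bigcupP [B2 hB2 yB].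
  apply/implyP => hG.
  move: hB1 hB2 => /set2P [] eB1 /set2P [] eB2; subst B1 B2.
  + by apply/exists_inP; exists E1; rewrite ?xB ?yB ?inE ?eqxx.
  + by move: hG xB yB; rewrite /E1 /E2 G_adj !in2 -val_eqE /jstep /=; lia.
  + by move: hG xB yB; rewrite /E1 /E2 G_adj !in2 -val_eqE /jstep /=; lia.
  + by apply/exists_inP; exists E2; rewrite ?xB ?yB ?inE ?eqxx ?orbT.
Qed.

Lemma nu_G : nu [set: 'I_n] G = (if n %/ gcdn n j == 4 then 2 else 1).
Proof.
rewrite k_eq4 /nu; apply/eqP; rewrite eqn_leq; apply/andP; split.
  apply/bigmax_leqP => M hM; case: eqP => h4; first exact: matching_le2 hM.
  by rewrite leqNgt; apply/negP => /(matching_two hM)/h4.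
have h0 : 0 < n by lia.
have bigM M : induced_matching [set: 'I_n] G M ->
    #|M| <= \max_(M' | induced_matching [set: 'I_n] G M') #|M'|.
  by move=> hM; apply: (@leq_bigmax_cond _ (induced_matching [set: 'I_n] G) (fun M => #|M|) _ hM).
case: eqP => h4; first by have [M [hM <-]] := matching_diagonals h4; exact: bigM.
pose b := if j == 1 then 2 else 1.
have hb : b < n by rewrite /b; case: ifP; lia.
have hG : G (Ordinal h0) (Ordinal hb).
  by rewrite G_adj -val_eqE /jstep /= /b; case: (eqVneq j 1) => hj; lia.
by have := bigM _ (matching_edge hG); rewrite cards1.
Qed.

(** If gcd(n, j) > 1, D is disconnected. *)

Lemma adj_residue (x y : 'I_n) : adj D x y -> (gcdn n j %| x) = (gcdn n j %| y).
Proof.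
move=> e; case: (eqVneq x y) => [->//|xy].
have : jstep x y by move/in_DP: e; apply; rewrite ?inE ?eqxx ?orbT.
have gj := dvdn_gcdr n j; have gn := dvdn_gcdl n j.
case/or4P => /eqP e1.
- by rewrite e1 (dvdn_addl _ gj).
- by rewrite -(dvdn_addl x gj) -e1 (dvdn_addl _ gn).
- by rewrite e1 (dvdn_addl _ gj).
- by rewrite -(dvdn_addl x gn) e1 (dvdn_addl _ gj).
Qed.

Section Disconnected.
Hypothesis g_neq1 : gcdn n j != 1.

Let lt0n : 0 < n. Proof. lia. Qed.
Let lt1n : 1 < n. Proof. lia. Qed.
Let ltjn : j < n. Proof. lia. Qed.
Let o0 : 'I_n := Ordinal lt0n.
Let o1 : 'I_n := Ordinal lt1n.
Let oj : 'I_n := Ordinal ltjn.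

Lemma disconnected01 : ~~ connect (adj D) o0 o1.
Proof.
apply/negP => /(closed_connect (a := [pred x : 'I_n | gcdn n j %| x]) adj_residue).
by rewrite !inE dvdn0 dvdn1 (negbTE g_neq1).
Qed.

Lemma edge0_in : [set o0; oj] \in D.
Proof. by apply: pair_in; rewrite /jstep /= eqxx. Qed.

Lemma edge0_card : #|[set o0; oj]| = 2.
Proof. by rewrite cards2 jstep_neq // /jstep /= eqxx. Qed.

Lemma edge0_big : exists2 F, F \in D & 1 < #|F|.
Proof. by exists [set o0; oj]; rewrite ?edge0_in ?edge0_card. Qed.

Lemma not_vdec : ~ vdec D.
Proof.
move=> hv; move/negP: disconnected01; apply.
exact: (vdec_connected hv simplicial_D edge0_big (single_in o0) (single_in o1)).
Qed.

Lemma not_shellable : ~ shellable D.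
Proof.
move=> hs; move/negP: disconnected01; apply.
exact: (shellable_connected hs simplicial_D edge0_big (single_in o0) (single_in o1)).
Qed.

Lemma not_CM (K : fieldType) : ~ CM K D.
Proof.
apply: (not_CM_disconnected simplicial_D edge0_in _ (single_in o0) (single_in o1)
  disconnected01); by rewrite edge0_card.
Qed.

Lemma not_S2 : ~ S2 D.
Proof.
apply: (not_S2_disconnected simplicial_D edge0_in _ (single_in o0) (single_in o1)
  disconnected01); by rewrite edge0_card.
Qed.

Lemma not_seqCM (K : fieldType) : ~ seqCM K D.
Proof.
have E1_in := pair_in (jstep_succ o1).
have E1_card : #|[set o1; succ_j o1]| = 2 by rewrite cards2 jstep_neq // jstep_succ.
apply: (not_seqCM_disconnected simplicial_D edge0_in edge0_card _ E1_in E1_card _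
  disconnected01); by rewrite !inE eqxx.
Qed.

End Disconnected.

(** If gcd(n, j) = 1, D is the n-cycle 0, j, 2j, ... of C_n({j}). *)

Section Cycle.
Hypothesis g_eq1 : gcdn n j = 1.

Let lt0n : 0 < n. Proof. lia. Qed.

Definition cyc (i : nat) : 'I_n := Ordinal (ltn_pmod (i * j) lt0n).

Lemma cyc_eq a b : a < 2 * n -> b < 2 * n -> cyc a = cyc b ->
  [\/ a = b, a = b + n | b = a + n].
Proof.
move=> ha hb /(congr1 val) /= e.
wlog ba : a b ha hb e / b <= a.
  move=> W; case: (leqP b a) => h; first exact: W.
  by case: (W b a hb ha (esym e) (ltnW h)) => ->; [constructor 1|constructor 3|constructor 2].
have : n %| a * j - b * j by rewrite -eqn_mod_dvd ?leq_mul2r ?ba ?orbT //; apply/eqP.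
rewrite -mulnBl Gauss_dvdl; last by rewrite /coprime g_eq1.
case/dvdnP => k hk; have : k = 0 \/ k = 1 by nia.
by case=> hk'; subst k; [constructor 1|constructor 2]; lia.
Qed.

Lemma cyc_neq a b : a < 2 * n -> b < 2 * n -> a != b -> a != b + n -> b != a + n ->
  cyc a != cyc b.
Proof.
move=> ha hb h1 h2 h3; apply/eqP => /(cyc_eq ha hb) [] e;
  by [rewrite e eqxx in h1 | rewrite e eqxx in h2 | rewrite e eqxx in h3].
Qed.

Lemma cyc_succ i : cyc i.+1 = succ_j (cyc i).
Proof.
apply: val_inj; rewrite /= /succ_val; have := ltn_mod (i * j) n.
case: ifP => h hlt; rewrite mulSnr -modnDml; first by rewrite modn_small.
have -> : i * j %% n + j = (i * j %% n + j - n) + n by lia.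
by rewrite modnDr modn_small //; lia.
Qed.

Lemma jstep_cyc i : jstep (cyc i) (cyc i.+1).
Proof. by rewrite cyc_succ jstep_succ. Qed.

Lemma cyc_n : cyc n = cyc 0.
Proof. by apply: val_inj; rewrite /= modnMr mul0n mod0n. Qed.

Lemma cyc_surj (a : 'I_n) : exists2 i, i < n & cyc i = a.
Proof.
have inj : injective (fun i : 'I_n => cyc i).
  move=> i k /cyc_eq h; apply: ord_inj; have hi := ltn_ord i; have hk := ltn_ord k.
  by case: (h ltac:(lia) ltac:(lia)); lia.
have [g _ gf] := injF_bij inj.
by exists (g a); rewrite ?ltn_ord //; exact: gf.
Qed.

Lemma cyc_edge_in i : [set cyc i; cyc i.+1] \in D.
Proof. exact: pair_in (jstep_cyc i). Qed.

Lemma face_cyc_edge A : A \in D -> exists2 i, i < n & A \subset [set cyc i; cyc i.+1].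
Proof.
move=> AD; case: (set_0Vmem A) => [->|[a aA]]; first by exists 0; rewrite ?sub0set.
have [i hi ea] := cyc_surj a.
case: (boolP (A \subset [set a])) => hA.
  by exists i => //; apply: subset_trans hA _; rewrite -ea sub1set !inE eqxx.
case/subsetPn: hA => b bA /set1P /eqP ba.
have A2 : #|A| <= 2.
  rewrite leqNgt; apply/negP => /(face3 AD) j3.
  by move: g_eq1; rewrite -j3 gcdnC gcdnMl; lia.
have eA : A = [set a; b].
  apply/esym/eqP; rewrite eqEcard subUset !sub1set aA bA /= cards2 eq_sym ba.
  exact: A2.
have cab : jstep a b by move/in_DP: AD; apply => //; rewrite eq_sym.
case: (jstep_nbr cab) => eb.
  by exists i => //; rewrite eA eb -ea cyc_succ.
have [k hk ek] := cyc_surj b.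
rewrite eA; have -> : a = succ_j b by rewrite eb succ_pred.
by exists k => //; rewrite -ek -cyc_succ setUC.
Qed.

Lemma face_card_le2 A : A \in D -> #|A| <= 2.
Proof.
case/face_cyc_edge => i _ hA; apply: leq_trans (subset_leq_card hA) _.
by rewrite cards2; case: (_ != _).
Qed.

Lemma connected_D : connectedc D.
Proof.
move=> x y _ _; apply: (@connected_from _ D (cyc 0)); try exact: single_in.
move=> w _; have [i _ <-] := cyc_surj w.
elim: i => [|i IH]; first exact: connect0.
exact: connect_trans IH (connect1 (cyc_edge_in i)).
Qed.

Lemma CM_D (K : fieldType) : CM K D.
Proof. by apply: CM_dim1 simplicial_D face_card_le2 _ => _; exact: connected_D. Qed.

Lemma S2_D : S2 D.
Proof. exact: S2_dim1 face_card_le2 connected_D. Qed.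

Lemma seqCM_D (K : fieldType) : seqCM K D.
Proof. exact: seqCM_dim1 simplicial_D face_card_le2 connected_D. Qed.

(** Vertex decomposability: shed the vertex cyc (n-1) of the cycle, then peel
    the remaining path cyc 0 - ... - cyc (n-2) from its end. *)

(* The complex of the walk cyc 0, cyc 1, ..., cyc m: a path for m < n, the
   whole cycle for m = n. *)
Definition walk_cx (m : nat) : {set {set 'I_n}} :=
  [set A : {set 'I_n} | [exists i : 'I_m.+1, A \subset [set cyc i; cyc i.-1]]].

Lemma walk_cxP m (A : {set 'I_n}) :
  reflect (exists2 i, i <= m & A \subset [set cyc i; cyc i.-1]) (A \in walk_cx m).
Proof.
rewrite inE; apply: (iffP existsP) => [[i hi]|[i hi hA]].
  by exists i => //; rewrite -ltnS ltn_ord.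
by exists (Ordinal (hi : i < m.+1)).
Qed.

Lemma sub_pair_drop (p q : 'I_n) (A : {set 'I_n}) :
  A \subset [set p; q] -> p \notin A -> A \subset [set q].
Proof.
move=> h pA; apply/subsetP => x xA; case/set2P: (subsetP h x xA) => [ex|->]; last exact: set11.
by subst x; rewrite xA in pA.
Qed.

Lemma sub_pair_l (p q : 'I_n) (A : {set 'I_n}) : A \subset [set p] -> A \subset [set p; q].
Proof. by move=> h; apply: subset_trans h _; rewrite sub1set !inE eqxx. Qed.

Lemma sub_pair_r (p q : 'I_n) (A : {set 'I_n}) : A \subset [set p] -> A \subset [set q; p].
Proof. by move=> h; apply: subset_trans h _; rewrite sub1set !inE eqxx orbT. Qed.

Lemma notin_sub_pair (x p q : 'I_n) (A : {set 'I_n}) :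
  A \subset [set p; q] -> x != p -> x != q -> x \notin A.
Proof.
move=> h xp xq; apply/negP => /(subsetP h).
by rewrite !inE (negbTE xp) (negbTE xq).
Qed.

Lemma disjoint_set1 (A : {set 'I_n}) x : [disjoint A & [set x]] = (x \notin A).
Proof. by rewrite disjoint_sym disjoints1. Qed.

Lemma D_walk_cx : D = walk_cx n.
Proof.
apply/setP => A; apply/idP/idP.
  by case/face_cyc_edge => i hi hA; apply/walk_cxP; exists i.+1 => //; rewrite /= setUC.
case/walk_cxP => [[|i]] hi hA; last by apply: simplicial_D (cyc_edge_in i) _; rewrite setUC.
apply: simplicial_D (cyc_edge_in 0) _; apply: subset_trans hA _.
by rewrite /= setUid sub1set !inE eqxx.
Qed.

Lemma walk_cx0 : walk_cx 0 = powerset [set cyc 0].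
Proof.
apply/setP => A; rewrite powersetE; apply/walk_cxP/idP => [[i hi hA]|hA].
  by move: hi hA; rewrite leqn0 => /eqP -> /=; rewrite setUid.
by exists 0 => //=; rewrite setUid.
Qed.

Lemma vertex_walk_cx m : [set cyc m] \in walk_cx m.
Proof. by apply/walk_cxP; exists m => //; apply: sub_pair_l. Qed.

Lemma pure_walk_cx m : 0 < m <= n -> pure (walk_cx m).
Proof.
move=> hm; apply: (@pure_of_card _ _ 2) => F /walk_cxP [i hi hF].
  by apply: leq_trans (subset_leq_card hF) _; rewrite cards2; case: (_ != _).
case: i hi hF => [|i] hi hF.
  exists [set cyc 1; cyc 0]; first by apply/walk_cxP; exists 1 => //; lia.
  rewrite cards2 cyc_neq /= ?andbT; try lia.
  by apply: subset_trans hF _; rewrite setUid sub1set !inE eqxx orbT.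
exists [set cyc i.+1; cyc i]; first by apply/walk_cxP; exists i.+1.
by rewrite hF cards2 cyc_neq //=; lia.
Qed.

Lemma del_walk_cx m : m.+1 < n -> del (walk_cx m.+1) [set cyc m.+1] = walk_cx m.
Proof.
move=> hm; apply/setP => A; rewrite inE disjoint_set1; apply/idP/idP.
  case/andP => /walk_cxP [i hi hA] nA; apply/walk_cxP.
  case: (ltnP i m.+1) => h; first by exists i.
  have ei : i = m.+1 by lia.
  by subst i; exists m => //; apply: sub_pair_l; exact: sub_pair_drop hA nA.
case/walk_cxP => i hi hA; apply/andP; split; first by apply/walk_cxP; exists i => //; lia.
by apply: notin_sub_pair hA _ _; apply: cyc_neq; lia.
Qed.

Lemma lk_walk_cx m : m.+1 < n -> lk (walk_cx m.+1) [set cyc m.+1] = powerset [set cyc m].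
Proof.
move=> hm; apply/setP => A; rewrite inE disjoint_set1 powersetE; apply/idP/idP.
  case/and3P => _ nA /walk_cxP [i hi hA].
  have xin : cyc m.+1 \in [set cyc i; cyc i.-1].
    by apply: (subsetP hA); rewrite !inE eqxx orbT.
  have ei : i = m.+1 by case/set2P: xin => /cyc_eq h; case: (h ltac:(lia) ltac:(lia)); lia.
  by subst i; apply: sub_pair_drop nA; exact: subset_trans (subsetUl _ _) hA.
move=> hA; apply/and3P; split.
- by apply/walk_cxP; exists m => //; apply: sub_pair_l.
- by apply: notin_sub_pair (sub_pair_l (cyc m) hA) _ _; apply: cyc_neq; lia.
- by apply/walk_cxP; exists m.+1 => //=; rewrite setUC subUset sub1set !inE eqxx /= sub_pair_r.
Qed.

Lemma vdec_walk_cx m : m < n -> vdec (walk_cx m).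
Proof.
elim: m => [|m IH] hm; first by rewrite walk_cx0; exact: vdec_simplex.
apply: (@vdec_step _ _ (cyc m.+1)); [apply: pure_walk_cx; lia | exact: vertex_walk_cx | |].
  by rewrite lk_walk_cx //; exact: vdec_simplex.
by rewrite del_walk_cx //; apply: IH; lia.
Qed.

Lemma del_cycle : del (walk_cx n) [set cyc n.-1] = walk_cx n.-2.
Proof.
apply/setP => A; rewrite inE disjoint_set1; apply/idP/idP.
  case/andP => /walk_cxP [i hi hA] nA; apply/walk_cxP.
  case: (ltnP i n.-1) => h; first by exists i => //; lia.
  case: (eqVneq i n.-1) => ei.
    by subst i; exists n.-2 => //; apply: sub_pair_l; exact: sub_pair_drop hA nA.
  have ein : i = n by lia.
  subst i; exists 0 => //=; rewrite setUid -cyc_n.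
  by apply: sub_pair_drop nA; rewrite setUC.
case/walk_cxP => i hi hA; apply/andP; split; first by apply/walk_cxP; exists i => //; lia.
by apply: notin_sub_pair hA _ _; apply: cyc_neq; lia.
Qed.

Lemma lk_cycle :
  lk (walk_cx n) [set cyc n.-1] = powerset [set cyc n.-2] :|: powerset [set cyc 0].
Proof.
apply/setP => A; rewrite inE disjoint_set1 in_setU !powersetE; apply/idP/idP.
  case/and3P => _ nA /walk_cxP [i hi hA].
  have xin : cyc n.-1 \in [set cyc i; cyc i.-1] by apply: (subsetP hA); rewrite !inE eqxx orbT.
  have hA' : A \subset [set cyc i; cyc i.-1] by exact: subset_trans (subsetUl _ _) hA.
  move: xin => /set2P [] /cyc_eq h; case: (h ltac:(lia) ltac:(lia)) => ei; try lia.
    have ei' : i = n.-1 by lia.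
    by subst i; rewrite (sub_pair_drop hA' nA).
  have ei' : i = n by lia.
  by subst i; rewrite setUC cyc_n in hA'; rewrite (sub_pair_drop hA' nA) ?orbT.
case/orP => hA; apply/and3P; split.
- by apply/walk_cxP; exists n.-2 => //; [lia | apply: sub_pair_l].
- by apply: notin_sub_pair (sub_pair_l (cyc n.-2.-1) hA) _ _; apply: cyc_neq; lia.
- apply/walk_cxP; exists n.-1; first lia.
  by rewrite setUC subUset sub1set !inE eqxx /= sub_pair_r.
- by apply/walk_cxP; exists 0 => //=; rewrite setUid.
- by apply: notin_sub_pair (sub_pair_l (cyc 0) hA) _ _; apply: cyc_neq; lia.
- apply/walk_cxP; exists n => //.
  by rewrite setUC subUset sub1set !inE eqxx /= orbT cyc_n sub_pair_l.
Qed.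

Lemma vdec_D : vdec D.
Proof.
rewrite D_walk_cx; apply: (@vdec_step _ _ (cyc n.-1)); first (by apply: pure_walk_cx; lia).
- by apply/walk_cxP; exists n.-1 => //; [lia | apply: sub_pair_l].
- by rewrite lk_cycle; apply: vdec_two_points; apply: cyc_neq; lia.
- by rewrite del_cycle; apply: vdec_walk_cx; lia.
Qed.

Lemma shellable_D : shellable D.
Proof.
pose s := [seq [set cyc i; cyc i.+1] | i <- iota 0 n].
have ss : size s = n by rewrite size_map size_iota.
have ns i : i < n -> nth set0 s i = [set cyc i; cyc i.+1].
  by move=> hi; rewrite (nth_map 0) ?size_iota // nth_iota.
have c2 i : i < n -> #|[set cyc i; cyc i.+1]| = 2.
  by move=> hi; rewrite cards2 cyc_neq //; lia.
have pureD : pure D by rewrite D_walk_cx; apply: pure_walk_cx; lia.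
apply: (@shellable_graph _ _ s pureD).
- apply: uniq_perm; [|exact: enum_uniq|].
  + rewrite map_inj_in_uniq ?iota_uniq // => a b; rewrite !mem_iota !add0n.
    move=> /andP[_ ha] /andP[_ hb] e.
    have ina : cyc a \in [set cyc b; cyc b.+1] by rewrite -e !inE eqxx.
    have ina' : cyc a.+1 \in [set cyc b; cyc b.+1] by rewrite -e !inE eqxx orbT.
    move: ina ina' => /set2P [] /cyc_eq h1 /set2P [] /cyc_eq h2;
    case: (h1 ltac:(lia) ltac:(lia)); case: (h2 ltac:(lia) ltac:(lia)); lia.
  + move=> F; rewrite mem_enum; apply/mapP/idP => [[i]|Ff].
      rewrite mem_iota add0n => /andP [_ hi] ->.
      exact: facets_of_max_card face_card_le2 (cyc_edge_in i) (c2 i hi).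
    have [i hi hF] := face_cyc_edge (facet_in Ff).
    by exists i; [rewrite mem_iota | exact: esym (facet_max Ff (cyc_edge_in i) hF)].
- by move=> i; rewrite ss => hi; rewrite ns //; exact: c2.
- move=> i /andP [i0 hi]; rewrite ss in hi; exists i.-1; first lia.
  exists (cyc i), (cyc i.+1); rewrite ns // ns; last lia.
  rewrite prednK //; split => //; first by rewrite !inE eqxx orbT.
  by rewrite !inE negb_or; apply/andP; split; apply: cyc_neq; lia.
Qed.

End Cycle.
End Circulant.

Theorem theorem3p7 (K : fieldType) (n j : nat) :
  (4 <= n)%N -> (1 <= j <= n./2)%N ->
  let G := circulant n (fun d => (1 <= d <= n./2)%N && (d != j)) in
  let D := indep_complex [set: 'I_n] G in
  let k := (n %/ gcdn n j)%N in
  [/\ nu [set: 'I_n] G = (if k == 4 then 2 else 1)%N,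
      well_covered [set: 'I_n] G /\ buchsbaum K [set: 'I_n] G &
      [/\ vdec D <-> gcdn n j = 1%N,
          shellable D <-> gcdn n j = 1%N,
          CM K D <-> gcdn n j = 1%N,
          seqCM K D <-> gcdn n j = 1%N &
          S2 D <-> gcdn n j = 1%N]].
Proof.
move=> n_ge4 /andP [j_gt0 j_le_n2] G D k.
have j_le_half : (j.*2 <= n)%N by have := odd_double_half n; case: (odd n) => /= h; lia.
split; first exact: nu_G.
  by split; [exact: well_covered_G | exact: buchsbaum_G].
have [g1|g_neq1] := eqVneq (gcdn n j) 1%N.
  split; split=> // _; by [apply: vdec_D | apply: shellable_D | apply: CM_D
                          | apply: seqCM_D | apply: S2_D].
split; split=> [h|/eqP]; rewrite ?(negbTE g_neq1) //; exfalso; move: h.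
- exact: not_vdec.
- exact: not_shellable.
- exact: not_CM.
- exact: not_seqCM.
- exact: not_S2.
Qed.
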